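(* Let $n,m\ge1$, $c_1,\dots,c_n>0$, $T>0$, $\epsilon>0$, $r_1,\dots,r_m>0$, $\kappa_{ij}\ge0$. Let $\mu_j(q_j)=0$ for $q_j\le c_j$ and $\mu_j(q_j)=T(1-c_j/q_j)$ for $q_j>c_j$; $\delta_{ij}(\mu)=e^{-(\kappa_{ij}+\mu_j)/\epsilon}/\sum_k e^{-(\kappa_{ik}+\mu_k)/\epsilon}$; $\varphi^i_\epsilon(\mu)=-\epsilon\log\sum_j e^{-(\kappa_{ij}+\mu_j)/\epsilon}$; and $D(\mu)=\sum_i r_i\varphi^i_\epsilon(\mu)+\sum_j c_j\log(1-\mu_j/T)$ for $\mu\in[0,T)^n$. Let $q:[0,\infty)\to\mathbb{R}^n$ be a solution of $\dot q_j=\sum_i r_i\delta_{ij}(\mu(q))-q_j/T$, $j=1,\dots,n$, and let $\mathcal{T}$ be the set of times $t$ at which all functions $t\mapsto\mu_j(q_j(t))$ and $t\mapsto c_j\log(1-\mu_j(q_j(t))/T)$ are differentiable. Then for every $t\in\mathcal{T}$, $$\frac{d}{dt}D(\mu(q(t)))=\sum_{j:\,q_j(t)>c_j}T c_j\Big[\frac{\dot q_j(t)}{q_j(t)}\Big]^2\ge0.$$ Consequently, $D(\mu(q(t)))$ is non-decreasing in $t$.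
   Context: The complement of $\mathcal{T}$ in $[0,\infty)$ has Lebesgue measure zero, and $t\mapsto D(\mu(q(t)))$ is absolutely continuous. *)

From HB Require Import structures.
From mathcomp Require Import all_boot all_order all_algebra.
From mathcomp Require Import all_classical all_reals all_analysis.
Set Implicit Arguments. Unset Strict Implicit. Unset Printing Implicit Defensive.
Import Order.TTheory GRing.Theory Num.Theory.
Local Open Scope ring_scope.
Local Open Scope classical_set_scope.

Section Defs.
Variable R : realType.

Definition muf (T c q : R) : R := if q <= c then 0 else T * (1 - c / q).

Definition delta (m n : nat) (eps : R) (kappa : 'I_m -> 'I_n -> R)
    (mu : 'I_n -> R) (i : 'I_m) (j : 'I_n) : R :=
  expR (- (kappa i j + mu j) / eps) /
  \sum_(k < n) expR (- (kappa i k + mu k) / eps).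

Definition phi (m n : nat) (eps : R) (kappa : 'I_m -> 'I_n -> R)
    (mu : 'I_n -> R) (i : 'I_m) : R :=
  - eps * ln (\sum_(j < n) expR (- (kappa i j + mu j) / eps)).

Definition Dfun (m n : nat) (eps T : R) (kappa : 'I_m -> 'I_n -> R)
    (r : 'I_m -> R) (c : 'I_n -> R) (mu : 'I_n -> R) : R :=
  \sum_(i < m) r i * phi eps kappa mu i + \sum_(j < n) c j * ln (1 - mu j / T).

Definition goodTimes (n : nat) (T : R) (c : 'I_n -> R) (q : 'I_n -> R -> R)
  : set R :=
  [set t | 0 <= t /\ forall j : 'I_n,
     derivable (fun s => muf T (c j) (q j s)) t 1 /\
     derivable (fun s => c j * ln (1 - muf T (c j) (q j s) / T)) t 1].

Definition abs_cont_on (f : R -> R) (a b : R) : Prop :=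
  forall e : R, 0 < e -> exists d : R, 0 < d /\
    forall (k : nat) (x y : 'I_k -> R),
      (forall i, a <= x i /\ x i <= y i /\ y i <= b) ->
      (forall i j, i != j -> y i <= x j \/ y j <= x i) ->
      \sum_(i < k) (y i - x i) < d ->
      \sum_(i < k) `|f (y i) - f (x i)| < e.

End Defs.

From mathcomp Require Import all_boot all_order all_algebra.
From mathcomp Require Import all_classical all_reals all_analysis.
From mathcomp Require Import ring lra.
Set Implicit Arguments.
Unset Strict Implicit.
Unset Printing Implicit Defensive.
Import Order.TTheory GRing.Theory Num.Theory.
Import numFieldNormedType.Exports.
Local Open Scope ring_scope.
Local Open Scope classical_set_scope.

(* Write p_j := max(c_j, q_j), so that mu_j(q_j) = T (1 - c_j / p_j).  Since
   d phi^i / d mu_j = delta_ij, the chain rule gives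
     dD/dt = sum_j mu_j' (sum_i r_i delta_ij - c_j / (T - mu_j))
           = sum_j mu_j' (q_j' + (q_j - p_j) / T),
   using the equation of motion and c_j / (T - mu_j) = p_j / T.  Where q_j > c_j
   the j-th term is T c_j (q_j' / q_j)^2; where q_j <= c_j, mu_j attains its
   minimum 0, so mu_j' = 0 whenever it exists.
   Monotonicity needs no differentiability of D: at each t > 0, to the right of
   t, p_j coincides with q_j or with the constant c_j, unless q_j(t) = c_j and
   q_j'(t) = 0, in which case p_j itself has derivative 0 at t.  So D has a
   nonnegative lower right Dini derivative at every t > 0, and a continuous
   function with this property is nondecreasing (supremum argument). *)

Section RightGrowth.
Variable R : realType.
Implicit Types (f g : R -> R) (a b e x d : R).

Lemma is_derive_gt0_right f x d : is_derive x 1 f d -> 0 < d ->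
  \forall u \near x^'+, f x < f u.
Proof.
move=> [df <-] d0.
have := @cvgr_gt R R 0^' (Proper_dnbhs_numFieldType 0) _ _ df 0 d0.
rewrite !near_withinE => /nbhs_ballP [e /= e0 He].
apply/nbhs_ballP; exists e => //= u xu /= ltxu.
have := He (u - x); rewrite /ball /= sub0r normrN distrC subr_eq0 gt_eqF //.
move=> /(_ xu isT); rewrite /GRing.scale /= mulr1 subrK.
by rewrite pmulr_rgt0 ?invr_gt0 ?subr_gt0 // subr_gt0.
Qed.

Lemma is_derive_at_global_min f x d : is_derive x 1 f d -> (forall s, f x <= f s) -> d = 0.
Proof.
move=> fd fmin; case: (ltgtP d 0) => [dlt|dgt|//].
- have := is_derive_gt0_right (is_deriveN fd); rewrite oppr_gt0 => /(_ dlt).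
  by move=> /(@filter_ex _ x^'+ _ _) [u /=]; rewrite ltrN2 ltNge fmin.
- (* s |-> - f (- s) turns the left of x into the right of - x *)
  have fd' : is_derive (- - x) 1 f d by rewrite opprK.
  have := is_deriveN (is_derive1_comp fd' (is_deriveNid (- x) 1)).
  rewrite mulrN1 opprK => /is_derive_gt0_right /(_ dgt).
  move=> /(@filter_ex _ (- x)^'+ _ _) [u /=].
  by rewrite !fctE /= opprK ltrN2 ltNge fmin.
Qed.

Definition right_dini_nonneg f x :=
  forall e, 0 < e -> \forall u \near x^'+, f x <= f u + e * (u - x).

Lemma is_derive_right_dini_nonneg f g x d :
  is_derive x 1 g d -> 0 <= d -> g x = f x -> (\forall u \near x^'+, g u = f u) ->
  right_dini_nonneg f x.
Proof.
move=> gd d0 gfx gf e e0.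
have hd : is_derive x 1 (fun s => g s + e * (s - x)) (d + e * (1 - 0)) :=
  is_deriveD gd (is_deriveZ e (is_deriveB (is_derive_id x 1) (is_derive_cst x x 1))).
rewrite subr0 mulr1 in hd.
have := is_derive_gt0_right hd (ltr_wpDl d0 e0).
by apply: filterS2 gf => u <- /ltW; rewrite subrr mulr0 addr0 gfx.
Qed.

Lemma right_growth_le a b e f : a <= b -> 0 <= e -> {within `[a, b], continuous f} ->
  {in `[a, b[%R, forall x, \forall u \near x^'+, f x <= f u + e * (u - x)} ->
  f a <= f b + e * (b - a).
Proof.
move=> ab e0 fc fr.
pose A := [set x | a <= x <= b /\ f a <= f x + e * (x - a)].
have Aa : A a by split; [rewrite lexx ab | rewrite subrr mulr0 addr0].
have hsA : has_sup A by split; [exists a | exists b => x [/andP[]]].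
pose x0 := sup A.
have ax0 : a <= x0 by exact: sup_upper_bound.
have x0b : x0 <= b by apply: ge_sup; [exists a | move=> x [/andP[]]].
have Ax0 : f a <= f x0 + e * (x0 - a).
  apply/ler_addgt0Pr => r r0.
  have /subspace_continuousP/(_ x0) := fc.
  rewrite /= in_itv /= ax0 x0b => /(_ isT) /cvgrPdist_lt /(_ r r0).
  rewrite near_withinE => /nbhs_ballP [d /= d0 Hd].
  have [z [/andP [az zb] Az] x0z] := sup_adherent d0 hsA.
  have zx0 : z <= x0 by apply: sup_upper_bound => //; split; rewrite ?az ?zb.
  have := Hd z; rewrite /ball /= ger0_norm ?subr_ge0 // ltrBlDl -ltrBlDr.
  rewrite in_itv /= az zb => /(_ x0z isT).
  rewrite /from_subspace /= => /ltr_distlCDr fzx0.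
  have : e * (z - a) <= e * (x0 - a) by rewrite ler_wpM2l // lerB.
  lra.
suff <- : x0 = b by [].
apply/eqP; rewrite eq_le x0b leNgt /=; apply/negP => x0b'.
have := fr x0; rewrite in_itv /= ax0 x0b' => /(_ isT) Hr.
have [u /= [[x0u ub] Hu]] := @filter_ex _ x0^'+ _ _
  (filterI (filterI (nbhs_right_gt x0) (nbhs_right_lt x0b')) Hr).
have Au : A u by split; [rewrite (le_trans ax0 (ltW x0u)) ltW | lra].
by have := sup_upper_bound hsA Au; rewrite leNgt x0u.
Qed.

Lemma right_dini_nonneg_le_co a b f : a <= b -> {within `[a, b], continuous f} ->
  {in `[a, b[%R, forall x, right_dini_nonneg f x} -> f a <= f b.
Proof.
move=> ab fc fr; apply/ler_addgt0Pr => r r0.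
have ba1 : 0 < b - a + 1 by lra.
have e0 : 0 < r / (b - a + 1) by rewrite divr_gt0.
apply: le_trans (right_growth_le ab (ltW e0) fc _) _.
  by move=> x /fr; apply.
by rewrite lerD2l mulrAC ler_pdivrMr // ler_wpM2l ?ltW //; lra.
Qed.

Lemma right_dini_nonneg_le a b f : a <= b -> {within `[a, b], continuous f} ->
  {in `]a, b[%R, forall x, right_dini_nonneg f x} -> f a <= f b.
Proof.
move=> ab fc fr.
have inner a' : a < a' <= b -> f a' <= f b.
  case/andP => aa' a'b; apply: right_dini_nonneg_le_co a'b _ _.
  - by apply: continuous_subspaceW fc; apply: subset_itv; rewrite bnd_simp ?(ltW aa').
  - move=> x; rewrite in_itv /= => /andP [a'x xb]; apply: fr.
    by rewrite in_itv /= (lt_le_trans aa' a'x) xb.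
have [<- //|anb] := eqVneq a b.
apply/ler_addgt0Pr => r r0.
have /subspace_continuousP/(_ a) := fc.
rewrite /= in_itv /= lexx ab => /(_ isT) /cvgrPdist_lt /(_ r r0).
rewrite near_withinE => /nbhs_ballP [d /= d0 Hd].
pose z := Num.min (a + d / 2) b.
have az : a < z by rewrite lt_min ltrDl divr_gt0 // lt_neqAle anb ab.
have zb : z <= b by rewrite ge_min lexx orbT.
have zd : z <= a + d / 2 by rewrite ge_min lexx.
have /ltr_distlDr faz : `|f a - f z| < r.
  apply: Hd; last by rewrite in_itv /= (ltW az) zb.
  by rewrite /ball /= distrC ger0_norm ?subr_ge0 ?ltW //; lra.
by have := inner z; rewrite az zb => /(_ isT); lra.
Qed.

Lemma abs_cont_on_continuous f a b : abs_cont_on f a b -> {within `[a, b], continuous f}.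
Proof.
move=> fac; apply/subspace_continuousP => x; rewrite /= in_itv /= => /andP [ax xb].
apply/cvgrPdist_lt => e e0; rewrite near_withinE.
have [d [d0 Hd]] := fac e e0.
have one_piece lo hi : a <= lo -> lo <= hi -> hi <= b -> hi - lo < d -> `|f hi - f lo| < e.
  move=> alo lohi hib hilo.
  have := Hd 1%N (fun _ => lo) (fun _ => hi); rewrite !big_ord1; apply => //.
  by move=> i j; rewrite !ord1 eqxx.
apply/nbhs_ballP; exists d => // z /=; rewrite /ball /= in_itv /= => xz /andP [az zb].
rewrite /from_subspace /=; case: (lerP x z) => [le_xz|lt_zx].
- by rewrite distrC; apply: one_piece => //; move: xz; rewrite distrC ger0_norm ?subr_ge0.
- apply: one_piece => //; first exact: ltW.
  by move: xz; rewrite ger0_norm ?subr_ge0 ?ltW.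
Qed.

End RightGrowth.

Section MaxGerm.
Variable R : realType.
Implicit Types (f g : R -> R) (c x d : R).

Lemma is_derive0_squeeze f g x :
  (forall s, `|f s - f x| <= `|g s - g x|) -> is_derive x 1 g 0 -> is_derive x 1 f 0.
Proof.
move=> fg [gd gD].
have Qg : (fun h => h^-1 *: ((g \o shift x) (h *: 1) - g x)) @ 0^' --> 'D_1 g x := gd.
rewrite gD in Qg.
have Qf : (fun h => h^-1 *: ((f \o shift x) (h *: 1) - f x)) @ 0^' --> (0 : R).
  apply/cvgr0Pnorm_lt => e e0.
  have := @cvgr0_norm_lt R R R 0^' (Proper_dnbhs_numFieldType 0) _ Qg _ e0.
  apply: filterS => h /=.
  rewrite /GRing.scale /= mulr1 !normrM; apply: le_lt_trans.
  by rewrite ler_wpM2l.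
by apply: DeriveDef; [apply/cvg_ex; exists 0 | exact: cvg_lim].
Qed.

Lemma maxr_right_germ f c x d : is_derive x 1 f d ->
  exists F : R -> R, [/\ F x = Num.max c (f x),
    \forall u \near x^'+, F u = Num.max c (f u) & F = f \/ is_derive x 1 F 0].
Proof.
move=> fd.
have [[fxc fc]|[[cfx cf]|[fxc d0]]] : (f x <= c /\ \forall u \near x^'+, f u <= c) \/
    (c <= f x /\ \forall u \near x^'+, c < f u) \/ (f x = c /\ d = 0).
  have fx : {for x, continuous f}.
    by apply: differentiable_continuous; apply/derivable1_diffP; case: fd.
  have [fxc|cfx|fxc] := ltgtP (f x) c.
  - left; split => //.
    by apply: cvg_within; apply: filterS (cvgr_lt _ fx _ fxc) => u /ltW.
  - by right; left; split => //; apply: cvg_within (cvgr_gt _ fx _ cfx).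
  have [dlt|dgt|d0] := ltgtP d 0; [left | right; left | by right; right].
  - split => //.
    have := is_derive_gt0_right (is_deriveN fd); rewrite oppr_gt0 => /(_ dlt) fN.
    by apply: filterS fN => u /=; rewrite ltrN2 fxc => /ltW.
  - split => //.
    by apply: filterS (is_derive_gt0_right fd dgt) => u; rewrite fxc.
- exists (cst c); split; [by rewrite max_l | | right; exact: is_derive_cst].
  by apply: filterS fc => u /max_l.
- exists f; split; [by rewrite max_r | | by left].
  by apply: filterS cf => u /ltW /max_r.
exists (fun s => Num.max c (f s)); split => //; first exact: nearW.
right; apply: (@is_derive0_squeeze _ f); last by rewrite -d0.
move=> s; rewrite fxc maxxx; have [_|//] := leP (f s) c.
by rewrite subrr normr0.
Qed.

End MaxGerm.

Section Gradient.
Variables (R : realType) (n m : nat) (eps : R) (kappa : 'I_m -> 'I_n -> R).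
Hypotheses (n_gt0 : (0 < n)%N) (eps_neq0 : eps != 0).
Variables (M : 'I_n -> R -> R) (dM : 'I_n -> R) (t : R).
Hypothesis M_derive : forall j, is_derive t 1 (M j) (dM j).

Lemma is_derive_phi i : is_derive t 1 (fun s => phi eps kappa (fun j => M j s) i)
  (\sum_(j < n) delta eps kappa (fun j => M j t) i j * dM j).
Proof.
pose E j s := expR (- (kappa i j + M j s) / eps).
have E_derive j : is_derive t 1 (E j) (E j t * (- dM j / eps)).
  have inner : is_derive t 1 (fun s => - (kappa i j + M j s) / eps) (- dM j / eps).
    apply: is_derive_eq (is_deriveM (is_deriveN (is_deriveD
      (is_derive_cst (kappa i j) t 1) (M_derive j))) (is_derive_cst eps^-1 t 1)) _.
    by rewrite /GRing.scale /= mulr0 !add0r mulrC.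
  exact: is_derive1_comp (is_derive_expR _) inner.
have S_derive : is_derive t 1 (fun s => \sum_(j < n) E j s)
    (\sum_(j < n) E j t * (- dM j / eps)).
  by have := is_derive_sum E_derive; rewrite fct_sumE.
have S_gt0 : 0 < \sum_(j < n) E j t.
  rewrite (bigD1 (Ordinal n_gt0)) //= ltr_pwDl ?expR_gt0 //.
  by apply: sumr_ge0 => k _; rewrite expR_ge0.
have phi_derive : is_derive t 1 (fun s => phi eps kappa (fun j => M j s) i)
    (- eps * ((\sum_(j < n) E j t)^-1 * \sum_(j < n) E j t * (- dM j / eps))) :=
  is_deriveZ (- eps) (is_derive1_comp (is_derive1_ln S_gt0) S_derive).
apply: is_derive_eq phi_derive _; rewrite !mulr_sumr; apply: eq_bigr => j _.
by rewrite /delta /E; field; rewrite eps_neq0 gt_eqF.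
Qed.

Lemma is_derive_Dfun (T : R) (r : 'I_m -> R) (c : 'I_n -> R) :
  0 < T -> (forall j, M j t < T) ->
  is_derive t 1 (fun s => Dfun eps T kappa r c (fun j => M j s))
    (\sum_(j < n) dM j * (\sum_(i < m) r i * delta eps kappa (fun k => M k t) i j
                          - c j / (T - M j t))).
Proof.
move=> T_gt0 M_lt_T.
have phi_part : is_derive t 1
    (fun s => \sum_(i < m) r i * phi eps kappa (fun j => M j s) i)
    (\sum_(i < m) r i * \sum_(j < n) delta eps kappa (fun j => M j t) i j * dM j).
  have := is_derive_sum (fun i => is_deriveZ (r i) (is_derive_phi i)).
  by rewrite fct_sumE.
have pos j : 0 < 1 - M j t / T by rewrite subr_gt0 ltr_pdivrMr // mul1r.
have inner j : is_derive t 1 (fun s => 1 - M j s / T) (- (dM j / T)).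
  apply: is_derive_eq (is_deriveB (is_derive_cst (1 : R) t 1)
    (is_deriveM (M_derive j) (is_derive_cst T^-1 t 1))) _.
  by rewrite /GRing.scale /= mulr0 !add0r mulrC.
have log_derive j : is_derive t 1 (fun s => c j * ln (1 - M j s / T))
    (c j * ((1 - M j t / T)^-1 * - (dM j / T))) :=
  is_deriveZ (c j) (@is_derive1_comp _ (@ln R) _ t _ _ (is_derive1_ln (pos j)) (inner j)).
have log_part : is_derive t 1 (fun s => \sum_(j < n) c j * ln (1 - M j s / T))
    (\sum_(j < n) c j * ((1 - M j t / T)^-1 * - (dM j / T))).
  by have := is_derive_sum log_derive; rewrite fct_sumE.
apply: is_derive_eq (is_deriveD phi_part log_part) _.
under [RHS]eq_bigr do rewrite mulrBr.
rewrite sumrB; congr (_ + _).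
  under eq_bigr do rewrite mulr_sumr.
  rewrite exchange_big /=; apply: eq_bigr => j _; rewrite mulr_sumr.
  by apply: eq_bigr => i _; rewrite mulrA mulrC.
rewrite -sumrN; apply: eq_bigr => j _.
have TM : T - M j t != 0 by rewrite subr_eq0 gt_eqF.
by field; rewrite TM gt_eqF.
Qed.
End Gradient.

Section Muf.
Variables (R : realType) (T : R).
Hypothesis T_gt0 : 0 < T.
Implicit Types (c p t dq A : R) (P q : R -> R).

Lemma muf_maxr c p : 0 < c -> muf T c p = T * (1 - c / Num.max c p).
Proof.
by move=> c_gt0; rewrite /muf; case: leP => _; rewrite ?divff ?gt_eqF ?subrr ?mulr0.
Qed.

Lemma muf_ge0 c p : 0 < c -> 0 <= muf T c p.
Proof.
move=> c_gt0; rewrite muf_maxr //; apply: mulr_ge0; first exact: ltW.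
by rewrite subr_ge0 ler_pdivrMr ?mul1r ?le_max ?lexx // lt_max c_gt0.
Qed.

Lemma muf_lt c p : 0 < c -> muf T c p < T.
Proof.
move=> c_gt0; rewrite muf_maxr // gtr_pMr // ltrBlDr ltrDl divr_gt0 //.
by rewrite lt_max c_gt0.
Qed.

Lemma is_derive_muf_branch c P t dP : is_derive t 1 P dP -> P t != 0 ->
  is_derive t 1 (fun s => T * (1 - c / P s)) (T * c * dP / P t ^+ 2).
Proof.
move=> Pd Pt0.
apply: is_derive_eq (is_deriveZ T (is_deriveB (is_derive_cst (1 : R) t 1)
  (is_deriveZ c (is_deriveV Pt0 Pd)))) _.
by rewrite /GRing.scale /=; field.
Qed.

Lemma div_sub_muf_branch c p : 0 < c -> p != 0 -> c / (T - T * (1 - c / p)) = p / T.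
Proof.
move=> c_gt0 p0; have -> : T - T * (1 - c / p) = T * c / p by field.
by field; rewrite p0 !gt_eqF.
Qed.

Lemma derive_muf_contribution c q t dq A :
  0 < c -> is_derive t 1 q dq -> dq = A - q t / T ->
  derivable (fun s => muf T c (q s)) t 1 ->
  'D_1 (fun s => muf T c (q s)) t * (A - c / (T - muf T c (q t)))
    = if c < q t then T * c * (dq / q t) ^+ 2 else 0.
Proof.
move=> c_gt0 qd dqE mufd; case: ifPn => [cq|]; last first.
  rewrite -leNgt => qc.
  suff -> : 'D_1 (fun s => muf T c (q s)) t = 0 by rewrite mul0r.
  apply: is_derive_at_global_min (derivableP mufd) _ => s.
  by rewrite /muf qc muf_ge0.
have q_gt0 : 0 < q t := lt_trans c_gt0 cq.
have qc : {for t, continuous q}.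
  by apply: differentiable_continuous; apply/derivable1_diffP; case: qd.
have branch : \forall s \near t, muf T c (q s) = T * (1 - c / q s).
  by apply: filterS (cvgr_gt _ qc _ cq) => s cqs; rewrite muf_maxr // max_r ?ltW.
rewrite (near_eq_derive _ branch) (nbhs_singleton branch).
have [_ ->] := is_derive_muf_branch c qd (lt0r_neq0 q_gt0).
by rewrite div_sub_muf_branch ?lt0r_neq0 // dqE; field; rewrite !gt_eqF.
Qed.

Lemma muf_right_germ c q t dq A :
  0 < c -> is_derive t 1 q dq -> dq = A - q t / T ->
  exists M : R -> R, [/\ M t = muf T c (q t),
    \forall u \near t^'+, M u = muf T c (q u), derivable M t 1
    & 0 <= 'D_1 M t * (A - c / (T - M t))].
Proof.
move=> c_gt0 qd dqE.
have [F [Ft Fnear Fq]] := maxr_right_germ c qd.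
have F_gt0 : 0 < F t by rewrite Ft lt_max c_gt0.
have [dF Fd dF_cases] : exists2 dF, is_derive t 1 F dF & dF = 0 \/ dF = dq /\ F t = q t.
  by case: Fq => [->|F0]; [exists dq => //; right | exists 0 => //; left].
have Md := is_derive_muf_branch c Fd (lt0r_neq0 F_gt0).
exists (fun s => T * (1 - c / F s)); split.
- by rewrite muf_maxr // Ft.
- by apply: filterS Fnear => u Fu; rewrite muf_maxr // Fu.
- by case: Md.
have [_ ->] := Md.
rewrite div_sub_muf_branch ?lt0r_neq0 //.
case: dF_cases => [->|[-> Fqt]]; first by rewrite mulr0 !mul0r.
have -> : A - F t / T = dq by rewrite Fqt dqE.
rewrite Fqt -[X in 0 <= X](_ : T * c * (dq / q t) ^+ 2 = _); last first.
  by field; rewrite -Fqt gt_eqF.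
by rewrite mulr_ge0 ?sqr_ge0 // mulr_ge0 ?ltW.
Qed.

End Muf.

Section Dissipation.
Variables (R : realType) (n m : nat) (c : 'I_n -> R) (T eps : R) (r : 'I_m -> R)
  (kappa : 'I_m -> 'I_n -> R) (q : 'I_n -> R -> R).
Hypotheses (n_gt0 : (0 < n)%N) (c_gt0 : forall j, 0 < c j) (T_gt0 : 0 < T)
  (eps_gt0 : 0 < eps).
Hypothesis q_ode : forall (j : 'I_n) (t : R), 0 < t ->
  derivable (q j) t 1 /\
  derive1 (q j) t = \sum_(i < m) r i * delta eps kappa (fun k => muf T (c k) (q k t)) i j
                    - q j t / T.

Let D (t : R) := Dfun eps T kappa r c (fun j => muf T (c j) (q j t)).

Lemma is_derive_q (j : 'I_n) (t : R) : 0 < t -> is_derive t 1 (q j) (derive1 (q j) t).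
Proof. by move=> t_gt0; rewrite derive1E; apply: derivableP; case: (q_ode j t_gt0). Qed.

Lemma is_derive_D t : 0 < t -> goodTimes T c q t ->
  is_derive t 1 D (\sum_(j < n | c j < q j t) T * c j * (derive1 (q j) t / q j t) ^+ 2).
Proof.
move=> t_gt0 [_ good].
have Md j := derivableP (good j).1.
have M_lt j : muf T (c j) (q j t) < T by exact: muf_lt.
apply: is_derive_eq (is_derive_Dfun kappa n_gt0 (lt0r_neq0 eps_gt0) Md r c T_gt0 M_lt) _.
rewrite [RHS]big_mkcond; apply: eq_bigr => j _.
by have := derive_muf_contribution T_gt0 (c_gt0 j) (is_derive_q j t_gt0)
  (q_ode j t_gt0).2 (good j).1.
Qed.

Lemma D_right_dini_nonneg t : 0 < t -> right_dini_nonneg D t.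
Proof.
move=> t_gt0.
have germ j := muf_right_germ T_gt0 (c_gt0 j) (is_derive_q j t_gt0) (q_ode j t_gt0).2.
have [M M_germ] := choice germ.
have Md j : is_derive t 1 (M j) ('D_1 (M j) t) by apply: derivableP; have [] := M_germ j.
have M_lt j : M j t < T by have [-> _ _ _] := M_germ j; exact: muf_lt.
have Mt : (fun k => M k t) = (fun k => muf T (c k) (q k t)).
  by apply/funext => k; have [] := M_germ k.
have Mnear j : \forall u \near t^'+, M j u = muf T (c j) (q j u) by have [] := M_germ j.
have DMd := is_derive_Dfun kappa n_gt0 (lt0r_neq0 eps_gt0) Md r c T_gt0 M_lt.
apply: (is_derive_right_dini_nonneg DMd).
- by rewrite Mt; apply: sumr_ge0 => j _; have [] := M_germ j.
- by rewrite /D -Mt.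
apply: filterS (filter_forall _ Mnear) => u Mu.
by rewrite /D; congr Dfun; apply/funext => j; exact: Mu.
Qed.

End Dissipation.

Theorem proposition3 (R : realType) (n m : nat) (hn : (1 <= n)%N) (hm : (1 <= m)%N)
  (c : 'I_n -> R) (T eps : R) (r : 'I_m -> R) (kappa : 'I_m -> 'I_n -> R)
  (hc : forall j, 0 < c j) (hT : 0 < T) (heps : 0 < eps)
  (hr : forall i, 0 < r i) (hkappa : forall i j, 0 <= kappa i j)
  (q : 'I_n -> R -> R)
  (hsol : forall (j : 'I_n) (t : R), 0 < t ->
     derivable (q j) t 1 /\
     derive1 (q j) t = \sum_(i < m) r i * delta eps kappa (fun k => muf T (c k) (q k t)) i j
                   - q j t / T)
  (hnull : (@lebesgue_measure R).-negligible
             ([set t | 0 <= t] `\` goodTimes T c q))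
  (hac : forall b : R, 0 <= b ->
     abs_cont_on (fun t => Dfun eps T kappa r c (fun j => muf T (c j) (q j t))) 0 b) :
  (forall t : R, 0 < t -> goodTimes T c q t ->
     derivable (fun s => Dfun eps T kappa r c (fun j => muf T (c j) (q j s))) t 1 /\
     derive1 (fun s => Dfun eps T kappa r c (fun j => muf T (c j) (q j s))) t
       = \sum_(j < n | c j < q j t) T * c j * (derive1 (q j) t / q j t) ^+ 2 /\
     0 <= \sum_(j < n | c j < q j t) T * c j * (derive1 (q j) t / q j t) ^+ 2)
  /\
  (forall s t : R, 0 <= s -> s <= t ->
     Dfun eps T kappa r c (fun j => muf T (c j) (q j s))
       <= Dfun eps T kappa r c (fun j => muf T (c j) (q j t))).
Proof.
split=> [t t_gt0 good | s t s_ge0 st].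
  have [D_derivable D_derive] := is_derive_D hn hc hT heps hsol t_gt0 good.
  split=> //; split; first by rewrite derive1E.
  by apply: sumr_ge0 => j _; rewrite mulr_ge0 ?sqr_ge0 // mulr_ge0 ?ltW.
(* Right Dini derivatives are controlled at every t > 0. *)
apply: (right_dini_nonneg_le
  (f := fun x => Dfun eps T kappa r c (fun j => muf T (c j) (q j x))) st).
  apply: continuous_subspaceW (abs_cont_on_continuous (hac t (le_trans s_ge0 st))).
  by apply: subset_itv; rewrite bnd_simp.
move=> x; rewrite in_itv /= => /andP [sx _].
by have := D_right_dini_nonneg hn hc hT heps hsol (le_lt_trans s_ge0 sx).
Qed.
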